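(* Let $f:\{1,\dots,n\}\to\{0,1\}$ and $S=\{i: f(i)=1\}$. Define $s(f(i),i)=0$ if $f(i)=0$ and $s(f(i),i)=i$ if $f(i)=1$, and let $T$ be the string of length $4n+2$ over the alphabet $\{0,\$\}\cup\{1,\dots,n\}$ given by $$T=0^{2n}\circ\$\circ\Big(\bigcirc_{i=1}^{n} 0\circ s(f(i),i)\Big)\circ 0,$$ where $\circ$ and $\bigcirc$ denote concatenation and $0^{2n}$ is $2n$ copies of the symbol $0$. Then the LZ77 factorization of $T$ has exactly $z=2|S|+4$ factors.
   Context: LZ77 factorization (greedy): start with $i=1$; while $i\le |T|$: if $T[i]$ is the first occurrence of its symbol, $T[i]$ is the next factor and $i\gets i+1$; otherwise take the largest $j\ge i$ such that $T[i..j]$ occurs in $T$ starting at some position $i'<i$ (overlap allowed), make $T[i..j]$ the next factor and set $i\gets j+1$. $z$ is the number of factors. The symbols $0,\$,1,\dots,n$ are pairwise distinct. *)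

From HB Require Import structures.
From mathcomp Require Import all_boot.
Set Implicit Arguments. Unset Strict Implicit. Unset Printing Implicit Defensive.

Inductive sym := Zero | Dollar | Idx of nat.

Definition sym_eqb (a b : sym) : bool :=
  match a, b with
  | Zero, Zero => true
  | Dollar, Dollar => true
  | Idx i, Idx j => i == j
  | _, _ => false
  end.

Lemma sym_eqP : Equality.axiom sym_eqb.
Proof.
case=> [||i] [||j] /=; try by constructor.
by apply: (iffP eqP) => [->|[]].
Qed.

HB.instance Definition _ := hasDecEq.Build sym sym_eqP.

Section LZ77.
Variable T : seq sym.
(* positions are 0-indexed here; T[i] = nth Zero T i *)
Local Notation t i := (nth Zero T i).

(* Length of the longest L such that T[i..i+L-1] (inside T) occurs starting at
   some earlier position i' < i (overlap allowed). *)
Definition lpf (i : nat) : nat :=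
  \max_(L < (size T - i).+1 |
        [exists i' : 'I_i, [forall k : 'I_L, t (i' + k) == t (i + k)]]) L.

(* Length of the greedy LZ77 factor starting at position i: 1 if T[i] is the
   first occurrence of its symbol (then lpf i = 0), else lpf i. *)
Definition lz_factor_len (i : nat) : nat := maxn 1 (lpf i).

Fixpoint lz_count_from (fuel i : nat) : nat :=
  match fuel with
  | 0 => 0
  | fuel'.+1 => if i < size T then (lz_count_from fuel' (i + lz_factor_len i)).+1
                else 0
  end.

(* z = number of factors of the LZ77 factorization of T (each factor has length
   >= 1, so size T steps of fuel suffice). *)
Definition lz77_z : nat := lz_count_from (size T) 0.
End LZ77.

Definition s_sym (f : nat -> bool) (i : nat) : sym := if f i then Idx i else Zero.

Definition lemma13_text (n : nat) (f : nat -> bool) : seq sym :=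
  nseq (2 * n) Zero ++ [:: Dollar] ++
  flatten [seq [:: Zero; s_sym f i] | i <- iota 1 n] ++ [:: Zero].

Definition card_S (n : nat) (f : nat -> bool) : nat := count f (iota 1 n).

From mathcomp Require Import all_boot zify.

Set Implicit Arguments.
Unset Strict Implicit.
Unset Printing Implicit Defensive.

(* The
   greedy parse starts with the factors [0], [0^{2n-1}] and the fresh [$].  From
   then on every symbol [i] of [S] is fresh, hence a factor of its own, and the
   zeros between two consecutive such symbols, as well as the zeros after the
   last one, form a run shorter than [2n]: it is copied from the prefix [0^{2n}]
   and ends exactly at the next fresh symbol or at the end of the text.  Hence
   [z = 3 + 2|S| + 1]. *)

Section GreedyParse.
Variable T : seq sym.
Local Notation t i := (nth Zero T i).

Definition copies (i' i L : nat) : Prop := forall k, k < L -> t (i' + k) = t (i + k).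

Definition fresh (p : nat) : Prop := forall q, q < p -> t q <> t p.

Lemma lpf_witnessP i L :
  reflect (exists2 i', i' < i & copies i' i L)
    [exists i' : 'I_i, [forall k : 'I_L, t (i' + k) == t (i + k)]].
Proof.
apply: (iffP existsP) => [[i' /forallP cp]|[i' lt_i'i cp]].
  by exists i' => // k lt_kL; apply/eqP; exact: (cp (Ordinal lt_kL)).
by exists (Ordinal lt_i'i); apply/forallP => k; apply/eqP; exact: cp.
Qed.

Lemma lpf_fresh p : fresh p -> lpf T p = 0.
Proof.
move=> fr; apply/eqP; rewrite -leqn0; apply/bigmax_leqP => L /lpf_witnessP[i' lt_i'p cp].
rewrite leqNgt; apply/negP => L_gt0.
by have := cp 0 L_gt0; rewrite !addn0; exact: fr.
Qed.

Lemma lpf_maximal i' i L : i' < i -> i + L <= size T -> copies i' i L ->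
  i + L = size T \/ fresh (i + L) -> lpf T i = L.
Proof.
move=> lt_i'i le_iL cp stop; apply/eqP; rewrite eqn_leq; apply/andP; split.
  apply/bigmax_leqP => L' /lpf_witnessP[i'' lt_i''i cp'].
  case: stop => [end_iL|fr]; first by have := ltn_ord L'; lia.
  rewrite leqNgt; apply/negP => lt_LL'.
  by apply: (fr (i'' + L)); [lia | exact: cp'].
have le_L : L < (size T - i).+1 by lia.
apply: (@leq_bigmax_cond _ _ (fun L : 'I_(size T - i).+1 => nat_of_ord L) (Ordinal le_L)).
by apply/lpf_witnessP; exists i'.
Qed.

Lemma lz_factor_len_gt0 i : 0 < lz_factor_len T i.
Proof. exact: leq_maxl. Qed.

Lemma lz_count_from_fuel fuel1 fuel2 i :
  size T - i <= fuel1 -> size T - i <= fuel2 ->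
  lz_count_from T fuel1 i = lz_count_from T fuel2 i.
Proof.
elim: fuel1 fuel2 i => [|fuel1 IH] [|fuel2] i //= le1 le2.
1, 2: by case: ltnP => //; lia.
case: ltnP => // lt_iT; congr S; apply: IH;
  by have := lz_factor_len_gt0 i; lia.
Qed.

Definition lz_count (i : nat) : nat := lz_count_from T (size T - i) i.

Lemma lz77_zE : lz77_z T = lz_count 0.
Proof. by rewrite /lz_count subn0. Qed.

Lemma lz_count_size : lz_count (size T) = 0.
Proof. by rewrite /lz_count subnn. Qed.

Lemma lz_countS i : i < size T -> lz_count i = (lz_count (i + lz_factor_len T i)).+1.
Proof.
move=> lt_iT; rewrite /lz_count [size T - i](_ : _ = (size T - i).-1.+1) /= ?lt_iT; last lia.
by congr S; apply: lz_count_from_fuel; have := lz_factor_len_gt0 i; lia.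
Qed.

Lemma lz_count_fresh p : p < size T -> fresh p -> lz_count p = (lz_count p.+1).+1.
Proof. by move=> lt_pT fr; rewrite lz_countS // /lz_factor_len lpf_fresh // addn1. Qed.

Lemma lz_count_copies i' i L : 0 < L -> i' < i -> i + L <= size T -> copies i' i L ->
  i + L = size T \/ fresh (i + L) -> lz_count i = (lz_count (i + L)).+1.
Proof.
move=> L_gt0 lt_i'i le_iL cp stop.
rewrite lz_countS; last lia.
by rewrite /lz_factor_len (lpf_maximal lt_i'i le_iL cp stop) (maxn_idPr L_gt0).
Qed.
End GreedyParse.

Section Text.
Variables (n : nat) (f : nat -> bool).
Local Notation blocks a m := (flatten [seq [:: Zero; s_sym f i] | i <- iota a m]).
Local Notation T := (lemma13_text n f).
Local Notation t q := (nth Zero (lemma13_text n f) q).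

Lemma size_blocks a m : size (blocks a m) = m.*2.
Proof. by elim: m a => //= m IH a; rewrite IH doubleS. Qed.

Lemma nth_blocks a m r :
  nth Zero (blocks a m) r = if odd r && (r < m.*2) then s_sym f (a + r./2) else Zero.
Proof.
elim: m a r => [|m IH] a [|[|r]] //=; rewrite ?nth_nil ?andbF ?addn0 //.
by rewrite IH doubleS !ltnS negbK addSnnS.
Qed.

Lemma size_text : size T = 4 * n + 2.
Proof. by rewrite /lemma13_text !size_cat size_nseq size_blocks /=; lia. Qed.

Lemma nth_text q : t q =
  if q < 2 * n then Zero
  else if q == 2 * n then Dollar
  else let r := q - (2 * n).+1 in
       if odd r && (r < n.*2) then s_sym f (r./2).+1 else Zero.
Proof.
rewrite /lemma13_text nth_cat size_nseq nth_nseq; case: ltnP => // le_nq.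
case: eqP => [->|ne_qn]; first by rewrite subnn.
rewrite [q - 2 * n](_ : _ = (q - (2 * n).+1).+1) /=; last lia.
rewrite nth_cat size_blocks nth_blocks.
by case: ltnP => _; rewrite ?add1n ?andbF // nth_seq1 if_same.
Qed.

Lemma nth_text_prefix q : q < 2 * n -> t q = Zero.
Proof. by rewrite nth_text => ->. Qed.

Lemma nth_text_dollar : t (2 * n) = Dollar.
Proof. by rewrite nth_text ltnn eqxx. Qed.

Lemma nth_text_block m : 1 <= m <= n -> f m -> t (2 * n + 2 * m) = Idx m.
Proof.
move=> le_1mn fm; rewrite nth_text ifF ?ifN_eq; try lia.
rewrite [_ - _](_ : _ = (m.-1).*2.+1) /=; last lia.
rewrite odd_double uphalf_double ifT; last lia.
by rewrite prednK /s_sym ?fm //; lia.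
Qed.

Lemma nth_text_eq_Dollar q : t q = Dollar -> q = 2 * n.
Proof.
rewrite nth_text /s_sym; case: ltnP => _; first by [].
by case: eqP => // _; case: ifP => // _; case: ifP.
Qed.

Lemma nth_text_eq_Idx q m : t q = Idx m -> [/\ q = 2 * n + 2 * m, 1 <= m <= n & f m].
Proof.
rewrite nth_text /s_sym; case: ltnP => le_nq; first by [].
case: eqP => // ne_qn; case: ifP => // /andP[odd_r lt_rn]; case: ifP => // fr [<-].
have := odd_double_half (q - (2 * n).+1); rewrite odd_r.
by split => //; lia.
Qed.

Lemma nth_text_zero q : q != 2 * n ->
  (forall m, 1 <= m <= n -> f m -> q != 2 * n + 2 * m) -> t q = Zero.
Proof.
move=> ne_qn ne_qm; case tq: (t q) => [//||m].
  by move: ne_qn; rewrite (nth_text_eq_Dollar tq) eqxx.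
by case: (nth_text_eq_Idx tq) => eq_q le_m fm; move: (ne_qm m le_m fm); rewrite eq_q eqxx.
Qed.

Lemma fresh_dollar : fresh T (2 * n).
Proof. by move=> q lt_qn; rewrite nth_text_prefix // nth_text_dollar. Qed.

Lemma fresh_block m : 1 <= m <= n -> f m -> fresh T (2 * n + 2 * m).
Proof.
move=> le_m fm q lt_q; rewrite nth_text_block // => /nth_text_eq_Idx[eq_q _ _]; lia.
Qed.

Lemma nth_text_zero_run i0 i q : 1 <= i0 -> (forall m, i0 <= m < i -> ~~ f m) ->
  2 * n + 2 * i0 - 1 <= q < 2 * n + 2 * i -> t q = Zero.
Proof.
move=> i0_gt0 nf le_q; apply: nth_text_zero => [|m le_m fm]; first lia.
have [lt_mi0|le_i0m] := ltnP m i0; first lia.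
have [lt_mi|] := ltnP m i; last lia.
by move: (nf m); rewrite le_i0m lt_mi fm => /(_ isT).
Qed.

(* The run has length [2 (i - i0) + 1 < 2n], so it is copied from the prefix
   [0^{2n}]; it stops at the fresh symbol [i], or at the end of the text. *)
Lemma lz_count_zero_run i0 i : 1 <= i0 <= i -> i <= n.+1 -> i - i0 < n ->
  (forall m, i0 <= m < i -> ~~ f m) -> (i <= n -> f i) ->
  lz_count T (2 * n + 2 * i0 - 1) = (lz_count T (2 * n + 2 * i)).+1.
Proof.
move=> le_i0i le_in lt_run nf stop.
have -> : 2 * n + 2 * i = 2 * n + 2 * i0 - 1 + (2 * (i - i0)).+1 by lia.
apply: (@lz_count_copies _ 0) => //; rewrite ?size_text; try lia.
- move=> k lt_k; rewrite nth_text_prefix ?(nth_text_zero_run _ nf) //; lia.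
- rewrite [_ + _](_ : _ = 2 * n + 2 * i); last lia.
  have [le_in'|lt_ni] := leqP i n; last by left; lia.
  by right; apply: fresh_block; [lia | exact: stop].
Qed.

(* The current factor is a zero run that starts in block [i0] and is still
   open at block [i].  Without [1 < i0] the run could span all [n] blocks,
   and would then be [2n + 1] long, too long to be a single copy. *)
Lemma lz_count_blocks i0 i : 1 <= i0 <= i -> i <= n.+1 ->
  (forall m, i0 <= m < i -> ~~ f m) -> (1 < i0) || has f (iota i (n.+1 - i)) ->
  lz_count T (2 * n + 2 * i0 - 1) = 2 * count f (iota i (n.+1 - i)) + 1.
Proof.
move Ed: (n.+1 - i) => d; elim: d i0 i Ed => [|d IH] i0 i Ed le_i0i le_in nf.
  rewrite orbF => lt1i0; rewrite (@lz_count_zero_run i0 i) //; try lia.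
  by rewrite [2 * n + _](_ : _ = size T) ?lz_count_size // size_text; lia.
rewrite /= => start; have le_in' : i <= n by lia.
have Ed' : n.+1 - i.+1 = d by lia.
have [fi|nfi] := boolP (f i).
  rewrite (@lz_count_zero_run i0 i) //; try lia.
  rewrite lz_count_fresh ?size_text; [| lia | apply: fresh_block => //; lia].
  rewrite [(2 * n + 2 * i).+1](_ : _ = 2 * n + 2 * i.+1 - 1); last lia.
  by rewrite (IH i.+1 i.+1) //= ?fi; lia.
rewrite (negbTE nfi) /= in start *.
apply: IH => // [|m le_m]; first lia.
by have [->|ne_mi] := eqVneq m i; [|apply: nf; lia].
Qed.
End Text.

Theorem lemma13 (n : nat) (f : nat -> bool) :
  0 < card_S n f ->
  lz77_z (lemma13_text n f) = 2 * card_S n f + 4.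
Proof.
move=> S_gt0; have n_gt0 : 0 < n by move: S_gt0; rewrite /card_S; case: n.
have zeros : copies (lemma13_text n f) 0 1 (2 * n - 1).
  by move=> k lt_k; rewrite !nth_text_prefix //; lia.
rewrite lz77_zE lz_count_fresh ?size_text //; last lia.
rewrite (lz_count_copies _ _ _ zeros) ?size_text; try lia; last first.
  by right; rewrite [1 + _](_ : _ = 2 * n); [exact: fresh_dollar | lia].
rewrite [1 + _](_ : _ = 2 * n); last lia.
rewrite lz_count_fresh ?size_text; [| lia | exact: fresh_dollar].
rewrite [(2 * n).+1](_ : _ = 2 * n + 2 * 1 - 1); last lia.
rewrite (@lz_count_blocks _ _ 1 1) ?subSS ?subn0 //; first by rewrite /card_S; lia.
  by case.
by rewrite -has_count in S_gt0; rewrite S_gt0 orbT.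
Qed.
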